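(* Let $q>0$ be a real number and let ${\mathbb O}({\rm SP}_q^{2|1})$ be the complex superalgebra generated by the even elements $x_+, x_-$ and the odd element $\theta$ subject to the relations $$x_+\theta = q\,\theta x_+,\quad \theta x_- = q\, x_-\theta,\quad x_-x_+ = q^{-2}x_+x_-,\quad \theta^2 = q^{1/2}(q-1)\,x_-x_+ .$$ Then there is a $\mathbb Z_2$-graded (conjugate-linear) involution $\star$ on ${\mathbb O}({\rm SP}_q^{2|1})$ determined by $$x_+^\star = q^{1/2}\,x_-,\qquad \theta^\star = {\bf i}\,\theta,\qquad x_-^\star = q^{-1/2}\,x_+ ,$$ where ${\bf i}=\sqrt{-1}$, so that ${\mathbb O}({\rm SP}_q^{2|1})$ becomes a super $\star$-algebra.
   Context: The grade of a homogeneous element $a$ is denoted $\tau(a)\in\{0,1\}$ ($x_\pm$ have grade $0$, $\theta$ has grade $1$). A $\mathbb Z_2$-graded involution (superinvolution) on an associative superalgebra ${\mathbb A}$ is a grade-preserving map $\star:{\mathbb A}\to{\mathbb A}$ with $(ab)^\star=(-1)^{\tau(a)\tau(b)}b^\star a^\star$ and $(a^\star)^\star=a$ for homogeneous $a,b$; the pair $({\mathbb A},\star)$ is then called a super $\star$-algebra. *)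

From mathcomp Require Import all_boot all_order all_algebra.
From mathcomp Require Import complex.
Set Implicit Arguments. Unset Strict Implicit. Unset Printing Implicit Defensive.
Import Order.TTheory GRing.Theory Num.Theory.
Local Open Scope ring_scope.

Inductive gen := gxp | gxm | gth.

Definition gen_grade (g : gen) : nat := if g is gth then 1%N else 0%N.

Section Presented.
Variable R : rcfType.
Local Notation C := (complex R).

Inductive term :=
| Gen of gen
| Const of C
| Add of term & term
| Mul of term & term.

Definition scal (c : C) (t : term) := Mul (Const c) t.

Definition cC (r : R) : C := (r%:C)%C.

Variable q : R.
Definition sq : C := cC (Num.sqrt q).

(* Least congruence: C-algebra axioms + defining relations.  The quotient
   term / tequiv is the algebra O(SP_q^{2|1}). *)
Inductive tequiv : term -> term -> Prop :=
| te_refl a : tequiv a a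
| te_sym a b : tequiv a b -> tequiv b a
| te_trans a b c : tequiv a b -> tequiv b c -> tequiv a c
| te_cong_add a a' b b' : tequiv a a' -> tequiv b b' -> tequiv (Add a b) (Add a' b')
| te_cong_mul a a' b b' : tequiv a a' -> tequiv b b' -> tequiv (Mul a b) (Mul a' b')
| te_add_assoc a b c : tequiv (Add a (Add b c)) (Add (Add a b) c)
| te_add_comm a b : tequiv (Add a b) (Add b a)
| te_add_0 a : tequiv (Add (Const 0) a) a
| te_add_opp a : tequiv (Add a (scal (-1) a)) (Const 0)
| te_mul_assoc a b c : tequiv (Mul a (Mul b c)) (Mul (Mul a b) c)
| te_mul_1l a : tequiv (Mul (Const 1) a) a
| te_mul_1r a : tequiv (Mul a (Const 1)) a
| te_distr_l a b c : tequiv (Mul a (Add b c)) (Add (Mul a b) (Mul a c))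
| te_distr_r a b c : tequiv (Mul (Add a b) c) (Add (Mul a c) (Mul b c))
| te_const_add x y : tequiv (Add (Const x) (Const y)) (Const (x + y))
| te_const_mul x y : tequiv (Mul (Const x) (Const y)) (Const (x * y))
| te_const_central x a : tequiv (Mul (Const x) a) (Mul a (Const x))
| te_rel1 : tequiv (Mul (Gen gxp) (Gen gth)) (scal (cC q) (Mul (Gen gth) (Gen gxp)))
| te_rel2 : tequiv (Mul (Gen gth) (Gen gxm)) (scal (cC q) (Mul (Gen gxm) (Gen gth)))
| te_rel3 : tequiv (Mul (Gen gxm) (Gen gxp)) (scal (cC (q ^- 2)) (Mul (Gen gxp) (Gen gxm)))
| te_rel4 : tequiv (Mul (Gen gth) (Gen gth))
                   (scal (sq * cC (q - 1)) (Mul (Gen gxm) (Gen gxp))).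

(* Syntactically homogeneous expressions of Z_2-degree d (d in {0,1}).
   An element of the quotient is homogeneous of degree d iff it has such a
   representative (the relations are homogeneous). *)
Inductive homog : nat -> term -> Prop :=
| ho_gen g : homog (gen_grade g) (Gen g)
| ho_const c : homog 0 (Const c)
| ho_zero d : (d < 2)%N -> homog d (Const 0)
| ho_add d a b : homog d a -> homog d b -> homog d (Add a b)
| ho_mul d e a b : homog d a -> homog e b -> homog ((d + e) %% 2) (Mul a b).

End Presented.

From mathcomp Require Import all_boot all_order all_algebra.
From mathcomp Require Import complex ring.
From Stdlib Require Import Setoid Morphisms.
Import Order.TTheory GRing.Theory Num.Theory.
Local Open Scope ring_scope.

(* Write a^* = alpha_0 + alpha_1 and b^* = beta_0 + beta_1 for the homogeneous
   components.  The sign rule forces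
     (ab)^* = (beta_0 alpha_0 - beta_1 alpha_1) + (beta_1 alpha_0 + beta_0 alpha_1),
   so the pair of components of t^* can be defined by recursion on formal terms.
   This recursion respects the algebra axioms, and it respects the defining
   relations because it sends each of them to a scalar multiple of another one:
   the first two relations are exchanged, the last two are sent to themselves
   (q and q^{1/2} are real, and i^2 = -1 absorbs the sign on theta^2).  Running
   the recursion twice returns the homogeneous components of t, so star is
   involutive. *)

Section StarStructure.
Variables (R : rcfType) (q : R).
Local Notation T := (term R).
Local Notation C := (complex R).
Local Notation "a ≡ b" := (tequiv q a b) (at level 70).
Local Notation sc c a := (Mul (Const c) a).
Local Notation xp := (Gen R gxp).
Local Notation xm := (Gen R gxm).
Local Notation th := (Gen R gth).

#[local] Instance tequiv_equiv : Equivalence (tequiv q).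
Proof. split; [exact: te_refl | exact: te_sym | exact: te_trans]. Qed.

#[local] Instance Add_proper : Proper (tequiv q ==> tequiv q ==> tequiv q) (@Add R).
Proof. by move=> ? ? ? ? ? ?; apply: te_cong_add. Qed.

#[local] Instance Mul_proper : Proper (tequiv q ==> tequiv q ==> tequiv q) (@Mul R).
Proof. by move=> ? ? ? ? ? ?; apply: te_cong_mul. Qed.

#[local] Hint Extern 0 (tequiv _ _ _) => reflexivity : core.

Lemma addtC (a b : T) : Add a b ≡ Add b a. Proof. exact: te_add_comm. Qed.
Lemma addtA (a b c : T) : Add a (Add b c) ≡ Add (Add a b) c. Proof. exact: te_add_assoc. Qed.
Lemma add0t (a : T) : Add (Const 0) a ≡ a. Proof. exact: te_add_0. Qed.
Lemma addt0 (a : T) : Add a (Const 0) ≡ a. Proof. by rewrite addtC add0t. Qed.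
Lemma addtN (a : T) : Add a (sc (-1) a) ≡ Const 0. Proof. exact: te_add_opp. Qed.

Lemma addtACA (a b c d : T) : Add (Add a b) (Add c d) ≡ Add (Add a c) (Add b d).
Proof. by rewrite !addtA -[Add (Add a b) c]addtA [Add b c]addtC addtA. Qed.

Lemma multA (a b c : T) : Mul a (Mul b c) ≡ Mul (Mul a b) c.
Proof. exact: te_mul_assoc. Qed.

Lemma multDr (a b c : T) : Mul a (Add b c) ≡ Add (Mul a b) (Mul a c).
Proof. exact: te_distr_l. Qed.

Lemma multDl (a b c : T) : Mul (Add a b) c ≡ Add (Mul a c) (Mul b c).
Proof. exact: te_distr_r. Qed.

Lemma addt_const (x y : C) : Add (Const x) (Const y) ≡ Const (x + y).
Proof. exact: te_const_add. Qed.

Lemma mult_const (x y : C) : Mul (Const x) (Const y) ≡ Const (x * y).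
Proof. exact: te_const_mul. Qed.

Lemma multC_const (x : C) (a : T) : Mul a (Const x) ≡ sc x a.
Proof. by symmetry; apply: te_const_central. Qed.

Lemma mul1t (a : T) : sc 1 a ≡ a. Proof. exact: te_mul_1l. Qed.
Lemma mult1 (a : T) : Mul a (Const 1) ≡ a. Proof. by rewrite multC_const mul1t. Qed.

Lemma mul0t (a : T) : sc 0 a ≡ Const 0.
Proof.
have twice : Add (sc 0 a) (sc 0 a) ≡ sc 0 a by rewrite -multDl addt_const addr0.
transitivity (Add (sc 0 a) (Add (sc 0 a) (sc (-1) (sc 0 a)))).
  by rewrite addtN addt0.
by rewrite addtA twice addtN.
Qed.

Lemma mult0 (a : T) : Mul a (Const 0) ≡ Const 0. Proof. by rewrite multC_const mul0t. Qed.

Lemma scaltA (c d : C) (a : T) : sc c (sc d a) ≡ sc (c * d) a.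
Proof. by rewrite multA mult_const. Qed.

Lemma multZ (c : C) (a b : T) : Mul a (sc c b) ≡ sc c (Mul a b).
Proof. by rewrite multA multC_const multA. Qed.

Lemma scal_eq (c d : C) (a : T) : c = d -> sc c a ≡ sc d a. Proof. by move=> ->. Qed.

Ltac tnorm := repeat first [rewrite multDl | rewrite multDr | rewrite scaltA
   | rewrite -multA | rewrite multZ].

Ltac tsimp := rewrite ?conjc0 ?conjc1 ?rmorphN1 ?mul0t ?mult0 ?mul1t ?mult1 ?add0t ?addt0.

Fixpoint star_parts (t : T) : T * T :=
  match t with
  | Gen gxp => (sc (sq q) xm, Const 0)
  | Gen gxm => (sc (sq q)^-1 xp, Const 0)
  | Gen gth => (Const 0, sc 'i%C th)
  | Const c => (Const (conjc c), Const 0)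
  | Add a b => (Add (star_parts a).1 (star_parts b).1,
                Add (star_parts a).2 (star_parts b).2)
  | Mul a b => (Add (Mul (star_parts b).1 (star_parts a).1)
                    (sc (-1) (Mul (star_parts b).2 (star_parts a).2)),
                Add (Mul (star_parts b).2 (star_parts a).1)
                    (Mul (star_parts b).1 (star_parts a).2))
  end.

Local Notation star0 t := (star_parts t).1.
Local Notation star1 t := (star_parts t).2.

Definition star (t : T) : T := Add (star0 t) (star1 t).

Definition same_star (a b : T) := star0 a ≡ star0 b /\ star1 a ≡ star1 b.

Lemma same_star_rel1 : same_star (Mul xp th) (sc (cC q) (Mul th xp)).
Proof.
split; cbn [star_parts fst snd]; tsimp; first by rewrite mul0t.
rewrite multC_const; tnorm; rewrite te_rel2 /scal scaltA.
by apply: scal_eq; rewrite /cC conjc_real; ring.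
Qed.

Lemma same_star_rel2 : same_star (Mul th xm) (sc (cC q) (Mul xm th)).
Proof.
split; cbn [star_parts fst snd]; tsimp; first by rewrite mul0t.
rewrite multC_const; tnorm; rewrite te_rel1 /scal scaltA.
by apply: scal_eq; rewrite /cC conjc_real; ring.
Qed.

Lemma same_star_rel3 : same_star (Mul xm xp) (sc (cC (q ^- 2)) (Mul xp xm)).
Proof.
split; cbn [star_parts fst snd]; tsimp; last by rewrite mul0t.
rewrite multC_const; tnorm; rewrite te_rel3 /scal scaltA.
by apply: scal_eq; rewrite /cC conjc_real; ring.
Qed.

Hypothesis q_gt0 : 0 < q.

Lemma sq_neq0 : sq q != 0.
Proof. by rewrite /sq /cC eq_complex /= eqxx andbT sqrtr_eq0 -ltNge q_gt0. Qed.

Lemma same_star_rel4 : same_star (Mul th th) (sc (sq q * cC (q - 1)) (Mul xm xp)).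
Proof.
split; cbn [star_parts fst snd]; tsimp; last by rewrite mul0t.
rewrite multC_const; tnorm; rewrite te_rel4 /scal scaltA.
apply: scal_eq; rewrite mulfK ?sq_neq0 // /sq /cC -rmorphM conjc_real.
by rewrite -(mulrA (-1)) -expr2 sqr_i; ring.
Qed.

Lemma same_star_tequiv a b : a ≡ b -> same_star a b.
Proof.
elim; rewrite /same_star /scal; cbn [star_parts fst snd].
- by [].
- by move=> a0 b0 _ [? ?]; split; symmetry.
- by move=> a0 b0 c0 _ [-> ->] _ [-> ->].
- by move=> a0 a1 b0 b1 _ [-> ->] _ [-> ->].
- by move=> a0 a1 b0 b1 _ [-> ->] _ [-> ->].
- by move=> *; rewrite !addtA.
- by move=> *; split; apply: addtC.
- by move=> *; rewrite conjc0 !add0t.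
- by move=> *; tsimp; rewrite !multC_const !addtN.
- move=> a0 b0 c0; split; tnorm.
  + by rewrite [Add (sc _ (Mul _ (Mul _ _))) (sc _ _)]addtC addtACA.
  + by rewrite [Add (Mul _ (Mul _ _)) (sc _ _)]addtC addtACA.
- by move=> *; tsimp.
- by move=> *; tsimp.
- by move=> *; split; tnorm; rewrite addtACA.
- by move=> *; split; tnorm; rewrite addtACA.
- by move=> *; rewrite addt_const rmorphD add0t.
- by move=> *; tsimp; rewrite mult_const rmorphM mulrC.
- by move=> *; tsimp; rewrite !multC_const.
- exact: same_star_rel1.
- exact: same_star_rel2.
- exact: same_star_rel3.
- exact: same_star_rel4.
Qed.

Lemma homog_lt2 {d : nat} {a : T} : homog d a -> (d < 2)%N.
Proof. by elim=> [[] | | | | *] //=; rewrite ltn_mod. Qed.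

Lemma homog_mul {d e n : nat} {a b : T} :
  homog d a -> homog e b -> n = ((d + e) %% 2)%N -> homog n (Mul a b).
Proof. by move=> ha hb ->; apply: ho_mul. Qed.

Lemma homog_star_parts t : homog 0 (star0 t) /\ homog 1 (star1 t).
Proof.
have homog_gen c g : homog (gen_grade g) (sc c (Gen R g)).
  by apply: homog_mul (ho_const _) (ho_gen _ _) _; case: g.
elim: t => [[] | c | a [a0 a1] b [b0 b1] | a [a0 a1] b [b0 b1]] /=.
- by split; [exact: homog_gen _ gxm | exact: ho_zero].
- by split; [exact: homog_gen _ gxp | exact: ho_zero].
- by split; [exact: ho_const | exact: homog_gen _ gth].
- by split; [exact: ho_const | exact: ho_zero].
- by split; apply: ho_add.
- split; apply: ho_add.
  + exact: homog_mul b0 a0 _.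
  + exact: homog_mul (ho_const _) (homog_mul b1 a1 erefl) _.
  + exact: homog_mul b1 a0 _.
  + exact: homog_mul b0 a1 _.
Qed.

Lemma star_homog_off_degree {d : nat} {a : T} : homog d a ->
  (d = 0%N -> star1 a ≡ Const 0) /\ (d = 1%N -> star0 a ≡ Const 0).
Proof.
elim=> {d a}; cbn [star_parts fst snd].
- by case.
- by [].
- by move=> d _; rewrite conjc0.
- by move=> d a b _ [a0 a1] _ [b0 b1]; split=> dE; rewrite ?(a0, b0, a1, b1) // add0t.
move=> d e a b /homog_lt2 d_lt2 [a0 a1] /homog_lt2 e_lt2 [b0 b1].
case: d d_lt2 a0 a1 => [|[|//]] _ a0 a1;
  case: e e_lt2 b0 b1 => [|[|//]] _ b0 b1 //=; split=> // _.
- by rewrite a0 // b0 //; tsimp.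
- by rewrite a0 // b1 //; tsimp.
- by rewrite a1 // b0 //; tsimp.
- by rewrite a1 // b1 //; tsimp.
Qed.

Lemma star1_star0 t : star1 (star0 t) ≡ Const 0.
Proof. by have [/(_ erefl) ? _] := star_homog_off_degree (homog_star_parts t).1. Qed.

Lemma star0_star1 t : star0 (star1 t) ≡ Const 0.
Proof. by have [_ /(_ erefl) ?] := star_homog_off_degree (homog_star_parts t).2. Qed.

Fixpoint grade_parts (t : T) : T * T :=
  match t with
  | Gen gth => (Const 0, th)
  | Gen g => (Gen R g, Const 0)
  | Const c => (Const c, Const 0)
  | Add a b => (Add (grade_parts a).1 (grade_parts b).1,
                Add (grade_parts a).2 (grade_parts b).2)
  | Mul a b => (Add (Mul (grade_parts a).1 (grade_parts b).1)
                    (Mul (grade_parts a).2 (grade_parts b).2),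
                Add (Mul (grade_parts a).1 (grade_parts b).2)
                    (Mul (grade_parts a).2 (grade_parts b).1))
  end.

Local Notation part0 t := (grade_parts t).1.
Local Notation part1 t := (grade_parts t).2.

Lemma grade_parts_sum t : Add (part0 t) (part1 t) ≡ t.
Proof.
elim: t => [[] | c | a IHa b IHb | a IHa b IHb] /=; rewrite ?add0t ?addt0 //.
  by rewrite addtACA IHa IHb.
transitivity (Mul (Add (part0 a) (part1 a)) (Add (part0 b) (part1 b))).
  by rewrite multDl !multDr addtACA [Add (Mul (part1 a) (part1 b)) _]addtC.
by rewrite IHa IHb.
Qed.

Lemma conjc_sq : conjc (sq q) = sq q. Proof. exact: conjc_real. Qed.

Lemma conjc_i : conjc ('i%C : C) = - 'i%C.
Proof. by apply/eqP; rewrite eq_complex /= oppr0 !eqxx. Qed.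

Lemma star_partsK t : star0 (star0 t) ≡ part0 t /\ star1 (star1 t) ≡ part1 t.
Proof.
elim: t => [[] | c | a [a0 a1] b [b0 b1] | a [a0 a1] b [b0 b1]];
  cbn [star_parts grade_parts fst snd].
- by split=> //; tsimp; rewrite multC_const scaltA conjc_sq mulfV ?sq_neq0 ?mul1t.
- by split=> //; tsimp; rewrite multC_const scaltA conjc_inv conjc_sq mulVf ?sq_neq0 ?mul1t.
- by split; tsimp; last rewrite multC_const scaltA conjc_i mulNr -expr2 sqr_i opprK mul1t.
- by rewrite conjcK.
- by rewrite a0 a1 b0 b1.
split; rewrite !star1_star0 !star0_star1; tsimp.
  by rewrite a0 b0 a1 b1 multC_const scaltA mulN1r opprK mul1t.
by rewrite a0 b0 a1 b1.
Qed.

Lemma star_tequiv a b : a ≡ b -> star a ≡ star b.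
Proof. by move=> /same_star_tequiv [e0 e1]; rewrite /star e0 e1. Qed.

Lemma starD a b : star (Add a b) ≡ Add (star a) (star b).
Proof. exact: addtACA. Qed.

Lemma starZ c a : star (scal c a) ≡ scal (conjc c) (star a).
Proof. by rewrite /star /scal; cbn [star_parts fst snd]; tsimp; rewrite !multC_const multDr. Qed.

Lemma star_homog d a : homog d a -> exists b, homog d b /\ star a ≡ b.
Proof.
move=> /[dup] /homog_lt2 d_lt2 /star_homog_off_degree [a0 a1].
case: d d_lt2 a0 a1 => [|[|//]] _ a0 a1.
- by exists (star0 a); split; [exact: (homog_star_parts a).1 | rewrite /star a0 // addt0].
- by exists (star1 a); split; [exact: (homog_star_parts a).2 | rewrite /star a1 // add0t].
Qed.

Lemma starM d e a b : homog d a -> homog e b ->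
  star (Mul a b) ≡ scal ((-1) ^+ (d * e)) (Mul (star b) (star a)).
Proof.
move=> /[dup] /homog_lt2 d_lt2 /star_homog_off_degree [a0 a1].
move=> /[dup] /homog_lt2 e_lt2 /star_homog_off_degree [b0 b1].
rewrite /star /scal; cbn [star_parts fst snd].
case: d d_lt2 a0 a1 => [|[|//]] _ a0 a1; case: e e_lt2 b0 b1 => [|[|//]] _ b0 b1.
- by rewrite a0 // b0 //; tsimp.
- by rewrite a0 // b1 //; tsimp.
- by rewrite a1 // b0 //; tsimp.
- by rewrite a1 // b1 //; tsimp.
Qed.

Lemma starK a : star (star a) ≡ a.
Proof.
rewrite /star; cbn [star_parts fst snd]; have [e0 e1] := star_partsK a.
by rewrite star0_star1 star1_star0 addt0 add0t e0 e1 grade_parts_sum.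
Qed.

Lemma star_gxp : star xp ≡ scal (sq q) xm. Proof. exact: addt0. Qed.
Lemma star_gth : star th ≡ scal 'i%C th. Proof. exact: add0t. Qed.
Lemma star_gxm : star xm ≡ scal (sq q)^-1 xp. Proof. exact: addt0. Qed.

End StarStructure.

Theorem proposition3p1 (R : rcfType) (q : R) (hq : 0 < q) :
  exists star : term R -> term R,
    (* well defined on the quotient O(SP_q^{2|1}) *)
    (forall a b, tequiv q a b -> tequiv q (star a) (star b)) /\
    (* conjugate-linear *)
    (forall a b, tequiv q (star (Add a b)) (Add (star a) (star b))) /\
    (forall (c : complex R) a,
        tequiv q (star (scal c a)) (scal (conjc c) (star a))) /\
    (* grade preserving *)
    (forall d a, homog d a -> exists b, homog d b /\ tequiv q (star a) b) /\
    (* (ab)^* = (-1)^{tau(a) tau(b)} b^* a^* for homogeneous a, b *)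
    (forall d e a b, homog d a -> homog e b ->
        tequiv q (star (Mul a b))
                 (scal ((-1) ^+ (d * e)) (Mul (star b) (star a)))) /\
    (* involutive *)
    (forall a, tequiv q (star (star a)) a) /\
    (* values on generators *)
    tequiv q (star (Gen R gxp)) (scal (sq q) (Gen R gxm)) /\
    tequiv q (star (Gen R gth)) (scal ('i)%C (Gen R gth)) /\
    tequiv q (star (Gen R gxm)) (scal ((sq q)^-1) (Gen R gxp)).
Proof.
exists (@star R q).
split; first exact: star_tequiv.
split; first exact: starD.
split; first exact: starZ.
split; first exact: star_homog.
split; first exact: starM.
split; first exact: starK.
split; first exact: star_gxp.
split; [exact: star_gth | exact: star_gxm].
Qed.
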